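(* Let $G$ be a group and let $M$ and $K$ be normal subgroups of $G$, where $M$ is finitely generated as a normal subgroup of $G$. If $H$ is a finite index normal subgroup of $G$ containing $M$, then \[relsize(M;H,K\cap H)\le |G:H|\,relsize(M;G,K).\]
   Context: For a group $G$, a normal subgroup $K$ and $g\in G$, with $\pi:G\to G/K$ the quotient map: if $g\in K$, $\nu(g;G,K)$ is the supremum of the orders of $\pi(a)$ in $G/K$ over all $a\in G$ with $a^n=g$ for some integer $n$; if $g\notin K$, $\nu(g;G,K)$ is the supremum of all non-zero integers $n$ with $g=a^n$ for some $a\in G$; $\nu(g;G,K)^{-1}$ is taken to be $0$ if $\nu(g;G,K)$ is infinite. For a finite set $S=\{s_1,\ldots,s_m\}\subseteq G$, $relsize(S;G,K)=\sum_{i=1}^m\nu(s_i;G,K)^{-1}$. For a normal subgroup $M$ of $G$ finitely generated as a normal subgroup, $relsize(M;G,K)$ is the infimum of $relsize(S;G,K)$ over all finite $S\subseteq G$ whose normal closure in $G$ is $M$. Likewise $relsize(M;H,K\cap H)$ is computed in the group $H$ with its normal subgroup $K\cap H$, over finite $S\subseteq H$ whose normal closure in $H$ is $M$. *)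

From HB Require Import structures.
From mathcomp Require Import all_boot all_order all_algebra.
From mathcomp Require Import monoid.
From mathcomp Require Import all_classical all_reals.
From mathcomp Require Import ereal finmap.


Set Implicit Arguments.
Unset Strict Implicit.
Unset Printing Implicit Defensive.

Import Order.TTheory GRing.Theory Num.Theory.
Local Open Scope classical_set_scope.

Section Defs.
Variable gT : groupType.

Definition is_subgroup (S : set gT) : Prop :=
  S 1%g /\ (forall x y, S x -> S y -> S (x * y^-1)%g).

Definition normal_in (A N : set gT) : Prop :=
  is_subgroup N /\ N `<=` A /\ (forall a x, A a -> N x -> N (x ^ a)%g).

Definition ncl (A : set gT) (s : seq gT) : set gT :=
  [set x | forall N : set gT, normal_in A N -> (forall y, y \in s -> N y) -> N x].

Definition zpow (a : gT) (n : int) : gT :=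
  match n with
  | Posz k => (a ^+ k)%g
  | Negz k => (a ^- k.+1)%g
  end.

Variable R : realType.
Local Open Scope ereal_scope.

(* order of the image of a in the quotient by K: least m > 0 with a^m in K,
   and +oo if there is none (ereal_inf of the empty set is +oo) *)
Definition coset_order (K : set gT) (a : gT) : \bar R :=
  ereal_inf [set ((m%:R)%:E : \bar R) | m in [set m : nat | (0 < m)%N /\ K (a ^+ m)%g]].

Definition nu (A K : set gT) (g : gT) : \bar R :=
  if pselect (K g) then
    ereal_sup [set coset_order K a | a in [set a | A a /\ exists n : int, zpow a n = g]]
  else
    ereal_sup [set ((n%:~R)%:E : \bar R) |
                n in [set n : int | (n != 0)%R /\ exists a, A a /\ zpow a n = g]].

(* nu^{-1}, with the convention 1/oo = 0 *)
Definition nuinv (A K : set gT) (g : gT) : R :=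
  if nu A K g == +oo then 0%R else ((fine (nu A K g))^-1)%R.

Local Close Scope ereal_scope.

(* relsize(S; A, K) for a finite set S given as a duplicate-free list *)
Definition relsize_list (A K : set gT) (s : seq gT) : R :=
  (\sum_(x <- s) nuinv A K x)%R.

Definition relsize (A K M : set gT) : R :=
  inf [set relsize_list A K s |
        s in [set s : seq gT | uniq s /\ (forall y, y \in s -> A y) /\ ncl A s = M]].

Definition lcoset (x : gT) (H : set gT) : set gT := [set (x * h)%g | h in H].
Definition cosets (H : set gT) : set (set gT) := range (fun x => lcoset x H).
Definition group_index (H : set gT) : nat := #|` fset_set (cosets H)|.

End Defs.

(* Let [s] be a normal generator of [M] in [G] and [a] a root of [s] (a^n = s)
   realizing nu(s; G, K).  If [d] is the order of [a] modulo [H], then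
   d <= |G:H|, and s = (a^d)^(n/d) with a^d in [H], so
   nu(s; G, K) <= d nu(s; H, K∩H).  As [a] centralizes [s], every
   G-conjugate of [s] is an H-conjugate of one of at most |G:H|/d elements
   s^r, one for each orbit of right multiplication by [a] on the cosets of [H].
   Replacing each generator by these conjugates yields normal generators of [M]
   in [H] costing at most (|G:H|/d) (d / nu(s; G, K)) = |G:H| nu(s; G, K)^-1
   per generator of [M] in [G]. *)

From HB Require Import structures.
From mathcomp Require Import all_boot all_order all_algebra.
From mathcomp Require Import monoid.
From mathcomp Require Import all_classical all_reals ereal.
From mathcomp Require Import finmap.
Import Order.TTheory GRing.Theory Num.Theory.
Local Open Scope classical_set_scope.
Local Open Scope ring_scope.
Set Implicit Arguments.
Unset Strict Implicit.
Unset Printing Implicit Defensive.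

Section Subgroups.
Variable gT : groupType.
Local Open Scope group_scope.
Implicit Types (S N : set gT) (x y g : gT).

Lemma subgroup1 S : is_subgroup S -> S 1.
Proof. by case. Qed.

Lemma subgroupV S x : is_subgroup S -> S x^-1 <-> S x.
Proof.
move=> [S1 SD]; suff Vx z : S z -> S z^-1 by split=> /Vx; rewrite ?invgK.
by move=> Sz; have := SD _ _ S1 Sz; rewrite mul1g.
Qed.

Lemma subgroupM S x y : is_subgroup S -> S x -> S y -> S (x * y).
Proof.
by move=> sS Sx Sy; have := sS.2 _ _ Sx ((subgroupV _ sS).2 Sy); rewrite invgK.
Qed.

Lemma subgroupX S x n : is_subgroup S -> S x -> S (x ^+ n).
Proof.
move=> sS Sx; elim: n => [|n IH]; first by rewrite expg0; apply: subgroup1.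
by rewrite expgS; apply: subgroupM.
Qed.

Lemma subgroupMl S x y : is_subgroup S -> S x -> S (x * y) -> S y.
Proof.
move=> sS Sx Sxy.
by have := subgroupM sS ((subgroupV _ sS).2 Sx) Sxy; rewrite mulKg.
Qed.

Lemma normal_conj N x g : normal_in setT N -> N x -> N (x ^ g).
Proof. by move=> [_ [_ nN]] Nx; apply: nN. Qed.

Lemma normal_conjK N x g : normal_in setT N -> N (x ^ g) -> N x.
Proof. by move=> nN /(normal_conj g^-1 nN); rewrite conjgK. Qed.

Lemma zpowJ x y n : zpow (x ^ y) n = (zpow x n) ^ y.
Proof. by case: n => k /=; rewrite ?conjVg conjXg. Qed.

Lemma zpow_commute x n : commute (zpow x n) x.
Proof.
apply: commute_sym; case: n => k /=; first exact/commuteX/commute_refl.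
exact/commuteV/commuteX/commute_refl.
Qed.

End Subgroups.

Section Cosets.
Variable gT : groupType.
Local Open Scope group_scope.
Implicit Types (H : set gT) (x y a g : gT).

Lemma lcoset_eqP H x y : is_subgroup H ->
  lcoset x H = lcoset y H <-> H (x^-1 * y).
Proof.
move=> sH; split.
  move=> exy; have : lcoset y H y by exists 1; [apply: subgroup1|rewrite mulg1].
  by rewrite -exy => -[h Hh <-]; rewrite mulKg.
move=> Hxy; apply/seteqP; split=> z [h Hh <-].
  exists (y^-1 * x * h); last by rewrite !mulgA mulgV mul1g.
  apply: subgroupM => //.
  by rewrite -[y^-1 * x]invgK invgM invgK; apply/subgroupV.
by exists (x^-1 * y * h); [apply: subgroupM|rewrite !mulgA mulgV mul1g].
Qed.

Lemma lcoset_mulr H x y a : normal_in setT H ->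
  lcoset (x * a) H = lcoset y H -> lcoset x H = lcoset (y * a^-1) H.
Proof.
move=> nH /(lcoset_eqP _ _ nH.1) Hxy; apply/(lcoset_eqP _ _ nH.1).
have := normal_conj a^-1 nH Hxy.
by rewrite /conjg invgK invgM !mulgA mulgV mul1g.
Qed.

Lemma lcoset_in_cosets H x : finite_set (cosets H) ->
  lcoset x H \in fset_set (cosets H).
Proof. by move=> fH; rewrite in_fset_set //; apply/mem_set; exists x. Qed.

Lemma group_index_gt0 H : finite_set (cosets H) -> (0 < group_index H)%N.
Proof.
move=> fH; rewrite /group_index cardfs_gt0; apply/fset0Pn.
by exists (lcoset 1 H); apply: lcoset_in_cosets.
Qed.

Definition order_mod H a d : Prop :=
  [/\ (0 < d)%N, H (a ^+ d) & forall j, (0 < j < d)%N -> ~ H (a ^+ j)].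

Lemma power_in_subgroup H a : is_subgroup H -> finite_set (cosets H) ->
  exists k, [/\ (0 < k)%N, (k <= group_index H)%N & H (a ^+ k)].
Proof.
move=> sH fH.
pose s := [seq lcoset (a ^+ j) H | j <- iota 0 (group_index H).+1].
have /negP : ~ uniq s.
  move=> us; suff : (size s <= group_index H)%N by rewrite size_map size_iota ltnn.
  apply: uniq_leq_size us _ => X /mapP [j _ ->]; exact: lcoset_in_cosets.
case/(uniqPn (lcoset 1 H)) => i [j [lij]]; rewrite size_map size_iota => jlt.
have ilt := ltn_trans lij jlt.
rewrite !(nth_map 0%N) ?size_iota // !nth_iota // !add0n => /(lcoset_eqP _ _ sH).
rewrite -{1}(subnKC (ltnW lij)) expgnDr mulKg => Hij.
exists (j - i)%N; split=> //; first by rewrite subn_gt0.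
by rewrite leq_subLR (leq_trans _ (leq_addl _ _)) // -ltnS.
Qed.

Lemma order_mod_exists H a : is_subgroup H -> finite_set (cosets H) ->
  exists2 d, order_mod H a d & (d <= group_index H)%N.
Proof.
move=> sH fH; have [k [k0 kidx Hk]] := power_in_subgroup a sH fH.
have exP : exists k, (0 < k)%N && `[< H (a ^+ k) >].
  by exists k; rewrite k0; apply/asboolP.
case: (ex_minnP exP) => d /andP [d0 /asboolP Hd] dmin.
exists d; last by apply: leq_trans kidx; apply: dmin; rewrite k0; apply/asboolP.
split; [exact: d0|exact: Hd|].
move=> j /andP [j0 jd] Hj.
have /dmin : (0 < j)%N && `[< H (a ^+ j) >] by rewrite j0; apply/asboolP.
by rewrite leqNgt jd.
Qed.
Lemma order_mod_dvd H a d n : is_subgroup H -> order_mod H a d ->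
  H (a ^+ n) -> (d %| n)%N.
Proof.
move=> sH [d0 Hd dmin] Hn.
have Hr : H (a ^+ (n %% d)).
  apply: (subgroupMl sH (subgroupX (n %/ d) sH Hd)).
  by rewrite -expgnA -expgnDr mulnC -divn_eq.
apply/negPn/negP => ndn; apply: (dmin (n %% d)%N) => //.
by rewrite lt0n -/(dvdn d n) ndn ltn_pmod.
Qed.

Lemma order_mod_zpow_root H a d n s : is_subgroup H -> order_mod H a d ->
  H s -> zpow a n = s -> exists q, zpow (a ^+ d) q = s.
Proof.
move=> sH ad Hs; have d0 : (0 < d)%N by case: ad.
case: n => k /= e.
  have dk : (d %| k)%N by apply: (order_mod_dvd sH ad); rewrite e.
  by exists (Posz (k %/ d)); rewrite /= -expgnA mulnC divnK.
have dk : (d %| k.+1)%N by apply: (order_mod_dvd sH ad); apply/subgroupV; rewrite ?e.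
have t0 : (0 < k.+1 %/ d)%N by rewrite divn_gt0 // dvdn_leq.
by exists (Negz (k.+1 %/ d).-1); rewrite /= prednK // -expgnA mulnC divnK.
Qed.

End Cosets.

Section CosetOrbits.
Variable gT : groupType.
Local Open Scope group_scope.
Implicit Types (H : set gT) (x y a g s r : gT).

Definition coset_orbit H x a d : seq (set gT) :=
  [seq lcoset (x * a ^+ j) H | j <- iota 0 d].

Lemma coset_orbit_uniq H x a d : is_subgroup H -> order_mod H a d ->
  uniq (coset_orbit H x a d).
Proof.
move=> sH [_ _ dmin]; rewrite map_inj_in_uniq ?iota_uniq // => i j.
rewrite !mem_iota !add0n => /andP [_ id] /andP [_ jd].
suff le_eq k l : (k <= l < d)%N -> lcoset (x * a ^+ k) H = lcoset (x * a ^+ l) H -> k = l.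
  by case: (leqP i j) => [lij|/ltnW lji] e; [|symmetry]; apply: le_eq; rewrite ?lij ?lji.
move=> /andP [lkl ld] /(lcoset_eqP _ _ sH).
rewrite invgM -mulgA mulKg -{1}(subnKC lkl) expgnDr mulKg => Hlk.
apply/eqP; rewrite eqn_leq lkl leqNgt; apply/negP => ltkl.
by apply: (dmin (l - k)%N) => //; rewrite subn_gt0 ltkl (leq_ltn_trans (leq_subr _ _)).
Qed.

Lemma coset_orbit_mulVr H x0 x a d : normal_in setT H -> order_mod H a d ->
  lcoset (x * a) H \in coset_orbit H x0 a d -> lcoset x H \in coset_orbit H x0 a d.
Proof.
move=> nH [d0 Hd _] /mapP [j]; rewrite mem_iota /= add0n => jd /(lcoset_mulr nH) ->.
case: j jd => [|j] jd.
  apply/mapP; exists d.-1; first by rewrite mem_iota add0n prednK ?leqnn.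
  apply/(lcoset_eqP _ _ nH.1).
  by rewrite expg0 mulg1 invgM invgK -mulgA mulKg -expgS prednK.
apply/mapP; exists j; first by rewrite mem_iota add0n (ltn_trans _ jd).
by rewrite expgSr mulgA mulgK.
Qed.

(* Right multiplication by [a] permutes the cosets in [C] in cycles of length
   [d]; [Rl] picks one starting point in each cycle. *)
Lemma coset_orbit_representatives H a d (C : seq (set gT)) :
  normal_in setT H -> order_mod H a d -> uniq C ->
  (forall X, X \in C -> exists x, X = lcoset x H) ->
  (forall x, lcoset x H \in C -> lcoset (x * a) H \in C) ->
  exists Rl : seq gT, (size Rl * d <= size C)%N /\
    forall x, lcoset x H \in C -> exists r j, r \in Rl /\ H ((r * a ^+ j)^-1 * x).
Proof.
move=> nH ad; have [n] := ubnP (size C); elim: n C => // n IH C.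
case: C => [|X C0] szC uC cosC clC.
  by exists [::]; split=> // x; rewrite in_nil.
have [x0 eX] := cosC X (mem_head _ _).
set C := X :: C0; set O := coset_orbit H x0 a d.
set C' := [seq Y <- C | Y \notin O].
have OC : {subset O <= C}.
  move=> _ /mapP [j _ ->]; elim: j => [|j IHj].
    by rewrite expg0 mulg1 -eX mem_head.
  by rewrite expgSr mulgA; apply: clC.
have dO : (d <= count (mem O) C)%N.
  rewrite -size_filter; have := uniq_leq_size (coset_orbit_uniq x0 nH.1 ad).
  by rewrite size_map size_iota; apply=> Y YO; rewrite mem_filter (OC _ YO) andbT.
have szC' : (size C' + d <= size C)%N.
  by rewrite size_filter -(count_predC (mem O) C) addnC leq_add2r.
have clC' x : lcoset x H \in C' -> lcoset (x * a) H \in C'.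
  rewrite !mem_filter => /andP [xO /clC ->]; rewrite andbT.
  exact: contra (coset_orbit_mulVr nH ad) xO.
have ltC'n : (size C' < n)%N.
  rewrite -ltnS; apply: leq_trans szC; rewrite ltnS; apply: leq_trans szC'.
  by rewrite -addn1 leq_add2l; case: ad.
have [R' [szR' covR']] := IH C' ltC'n (filter_uniq _ uC)
  (fun Y YC' => cosC Y (mem_subseq (filter_subseq _ _) YC')) clC'.
exists (x0 :: R'); split.
  by rewrite /= mulSn addnC; apply: leq_trans szC'; rewrite leq_add2r.
move=> x xC; case: (boolP (lcoset x H \in O)) => [/mapP [j _ e]|xO].
  exists x0, j; split; first exact: mem_head.
  by apply/(lcoset_eqP _ _ nH.1); rewrite e.
have xC' : lcoset x H \in C' by rewrite mem_filter xO xC.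
have [r [j [rR' Hr]]] := covR' x xC'.
by exists r, j; split=> //; rewrite in_cons rR' orbT.
Qed.

Lemma conj_commute s y : commute s y -> s ^ y = s.
Proof. by move=> c; rewrite /conjg c mulKg. Qed.

Lemma conj_coset_orbit H s a r j g : normal_in setT H -> commute s a ->
  H ((r * a ^+ j)^-1 * g^-1) -> exists2 h, H h & s ^ g = (s ^ r^-1) ^ h.
Proof.
move=> nH csa Ht; exists (r * a ^+ j * g).
  apply/(subgroupV _ nH.1); move: (normal_conj (r * a ^+ j)^-1 nH Ht).
  by rewrite /conjg invgK mulgA mulVKg -invgM.
by rewrite -conjgM -!mulgA mulKg conjgM (conj_commute (commuteX j csa)).
Qed.

Lemma conj_representatives H s a d : normal_in setT H -> finite_set (cosets H) ->
  commute s a -> order_mod H a d ->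
  exists Rl : seq gT, (size Rl * d <= group_index H)%N /\
    forall g, exists2 r, r \in Rl & exists2 h, H h & s ^ g = (s ^ r^-1) ^ h.
Proof.
move=> nH fH csa ad.
have cosC X : X \in fset_set (cosets H) -> exists x, X = lcoset x H.
  by rewrite in_fset_set // => /set_mem [x _ <-]; exists x.
have [Rl [szRl covRl]] := coset_orbit_representatives nH ad (fset_uniq _) cosC
  (fun x _ => lcoset_in_cosets (x * a) fH).
exists Rl; split=> // g; have [r [j [rRl Hr]]] := covRl g^-1 (lcoset_in_cosets _ fH).
by exists r => //; apply: conj_coset_orbit Hr.
Qed.

End CosetOrbits.

Section NormalClosure.
Variable gT : groupType.
Local Open Scope group_scope.
Implicit Types (A H M N : set gT) (L s : seq gT) (x y l g : gT).

Lemma ncl_mem A L y : y \in L -> ncl A L y.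
Proof. by move=> yL N _ LN; apply: LN. Qed.

Lemma ncl_min A L N : normal_in A N -> (forall y, y \in L -> N y) -> ncl A L `<=` N.
Proof. by move=> nN LN x; apply. Qed.

Lemma ncl_undup A L : ncl A (undup L) = ncl A L.
Proof.
apply/seteqP; split=> x nx N nN LN; apply: nx => // y.
  by rewrite mem_undup; apply: LN.
by rewrite -mem_undup; apply: LN.
Qed.

Lemma ncl_normal A L : is_subgroup A -> (forall y, y \in L -> A y) ->
  normal_in A (ncl A L).
Proof.
move=> sA LA; split; [split|split].
- by move=> N [sN _] _; apply: subgroup1.
- move=> x y nx ny N nN LN; apply: nN.1.2; [exact: nx|exact: ny].
- move=> x /(_ A); apply=> //; split=> //; split=> // a z Aa Az.
  by rewrite /conjg; apply: (subgroupM sA); [apply/(subgroupV _ sA)|apply: subgroupM].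
- move=> a x Aa nx N nN LN; apply: nN.2.2 => //; exact: nx.
Qed.

Lemma normal_in_sub A N : normal_in setT N -> N `<=` A -> normal_in A N.
Proof. by move=> [sN [_ nN]] NA; split=> //; split=> // a x _; apply: nN. Qed.

Lemma ncl_normal_setT A L : is_subgroup A -> (forall y, y \in L -> A y) ->
  (forall l g, l \in L -> ncl A L (l ^ g)) -> normal_in setT (ncl A L).
Proof.
move=> sA LA LJ; have [sN [NA NJ]] := ncl_normal sA LA.
suff nclJ x : ncl A L x -> forall g, ncl A L (x ^ g).
  by split=> //; split=> // g x _ /nclJ.
move=> /(_ (fun z => forall g, ncl A L (z ^ g))); apply; [split; [split|split]|].
- by move=> g; rewrite conj1g; apply: subgroup1.
- by move=> u v Nu Nv g; rewrite conjMg conjVg; apply: sN.2.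
- by move=> u /(_ 1); rewrite conjg1 => /NA.
- by move=> a u _ Nu g; rewrite -conjgM.
- by move=> l lL g; apply: LJ.
Qed.

Lemma ncl_conjugates H M s L : normal_in setT H -> normal_in setT M ->
  M `<=` H -> ncl setT s = M ->
  (forall l, l \in L -> exists y c, y \in s /\ l = y ^ c) ->
  (forall y, y \in s -> forall g,
     exists2 l, l \in L & exists2 h, H h & y ^ g = l ^ h) ->
  ncl H L = M.
Proof.
move=> nH nM MH eM LJs sJL.
have LM l : l \in L -> M l.
  by case/LJs=> y [c [ys ->]]; apply: normal_conj; rewrite // -eM; apply: ncl_mem.
have LH l : l \in L -> H l by move/LM; apply: MH.
have [_ [_ nclJ]] := ncl_normal nH.1 LH.
have nclG : normal_in setT (ncl H L).
  apply: ncl_normal_setT nH.1 LH _ => _ g /LJs [y [c [ys ->]]].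
  rewrite -conjgM; have [l lL [h Hh ->]] := sJL y ys (c * g).
  by apply: nclJ => //; apply: ncl_mem.
apply/seteqP; split; first exact: ncl_min (normal_in_sub nM MH) LM.
rewrite -eM; apply: ncl_min nclG _ => y ys.
have [l lL [h Hh]] := sJL y ys 1; rewrite conjg1 => ->.
by apply: nclJ => //; apply: ncl_mem.
Qed.

End NormalClosure.

Section ExtendedReals.
Variable R : realType.
Local Open Scope ereal_scope.

Definition ereal_inv (u : \bar R) : R :=
  if u == +oo then 0%R else ((fine u)^-1)%R.

Lemma ereal_inv_ge0 (u : \bar R) : 1 <= u -> (0 <= ereal_inv u)%R.
Proof.
case: u => [r||] //=; rewrite /ereal_inv //= lee_fin => r1.
by rewrite invr_ge0 (le_trans ler01 r1).
Qed.

Lemma ereal_inv_le (u v : \bar R) : 1 <= u -> u <= v ->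
  (ereal_inv v <= ereal_inv u)%R.
Proof.
case: u => [r||] //; case: v => [s||] //; rewrite /ereal_inv /= ?lee_fin => r1 rs.
- by rewrite lef_pV2 ?posrE ?(lt_le_trans ltr01) // (le_trans r1).
- by rewrite invr_ge0 (le_trans ler01 r1).
Qed.

Lemma ereal_inv_le_mul (u v : \bar R) (d : nat) : (0 < d)%N -> 1 <= v ->
  v <= d%:R%:E * u -> (ereal_inv u <= d%:R * ereal_inv v)%R.
Proof.
move=> d0; have dpos : (0 < d%:R :> R)%R by rewrite ltr0n.
case: v => [r||] //; rewrite ?lee_fin => v1; case: u => [t||] //=;
  rewrite /ereal_inv /= ?gt0_muley ?gt0_muleNy ?lte_fin // -?EFinM ?lee_fin //.
  have r0 : (0 < r)%R := lt_le_trans ltr01 v1.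
  move=> rdt; have t0 : (0 < t)%R by rewrite -(pmulr_rgt0 _ dpos) (lt_le_trans r0).
  by rewrite ler_pdivlMr // mulrC ler_pdivrMr.
by move=> _; rewrite divr_ge0 ?ler0n // (le_trans ler01).
Qed.

Lemma ereal_sup_int_mem (S : set (\bar R)) x0 :
  (forall x, S x -> x = +oo \/ exists z : int, x = (z%:~R)%:E) ->
  S x0 -> 0 <= x0 -> ereal_sup S != +oo -> S (ereal_sup S).
Proof.
move=> Sint Sx0 x00 supfin.
have supS x : S x -> x <= ereal_sup S by move=> Sx; apply: ereal_sup_ubound.
have Snat x : S x -> 0 <= x -> exists k : nat, x = (k%:R)%:E.
  move=> Sx; case: (Sint x Sx) => [xoo|[[k|k] ->]] x_ge0.
  - by move: (supS x Sx); rewrite xoo leye_eq (negbTE supfin).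
  - by exists k.
  - by move/fine_ge0: x_ge0; rewrite /= NegzE mulrNz oppr_ge0 lern0.
have [r supE] : exists r, ereal_sup S = r%:E.
  move: supfin (le_trans x00 (supS x0 Sx0)).
  by case: (ereal_sup S) => [r||] // _ _; exists r.
pose P k := `[< S (k%:R)%:E >].
have Pub k : P k -> (k <= Num.truncn r)%N.
  move=> /asboolP/supS; rewrite supE lee_fin => kr.
  by rewrite truncn_ge_nat // (le_trans _ kr).
have [k0 ek0] := Snat x0 Sx0 x00.
have Pex : exists k, P k by exists k0; apply/asboolP; rewrite -ek0.
case: (ex_maxnP Pex Pub) => k /asboolP Sk kmax.
suff -> : ereal_sup S = (k%:R)%:E by [].
apply/eqP; rewrite eq_le supS // andbT; apply: ge_ereal_sup => x Sx.
have [x_ge0|x_lt0] := leP 0 x; last by rewrite (le_trans (ltW x_lt0)) // lee_fin.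
have [k' ek'] := Snat x Sx x_ge0; rewrite ek' lee_fin ler_nat; apply: kmax.
by apply/asboolP; rewrite -ek'.
Qed.

End ExtendedReals.

Section RootOrders.
Variable R : realType.
Variable gT : groupType.
Implicit Types (A H K : set gT) (a b s g : gT).
Local Open Scope ereal_scope.

Lemma coset_order_spec K a :
  (coset_order R K a = +oo /\ forall m, (0 < m)%N -> ~ K (a ^+ m)%g) \/
  exists m, [/\ (0 < m)%N, K (a ^+ m)%g & coset_order R K a = (m%:R)%:E].
Proof.
case: (pselect (exists m, (0 < m)%N /\ K (a ^+ m)%g)) => [[m0 [m00 Km0]]|nex].
  right; have exP : exists m, (0 < m)%N && `[< K (a ^+ m)%g >].
    by exists m0; rewrite m00; apply/asboolP.
  case: (ex_minnP exP) => m /andP [m_gt0 /asboolP Km] mmin.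
  exists m; split=> //; apply/eqP; rewrite eq_le; apply/andP; split.
    by apply: ereal_inf_lbound; exists m.
  apply: le_ereal_inf_tmp => _ [m' [m'_gt0 Km'] <-].
  by rewrite lee_fin ler_nat mmin // m'_gt0; apply/asboolP.
left; split; last by move=> m m_gt0 Km; apply: nex; exists m.
rewrite /coset_order; suff -> : [set m : nat | (0 < m)%N /\ K (a ^+ m)%g] = set0.
  by rewrite image_set0 ereal_inf0.
by apply/seteqP; split=> // m [m_gt0 Km]; apply: nex; exists m.
Qed.

Lemma coset_order_le_mul K1 K2 a b d : (0 < d)%N ->
  (forall m, (0 < m)%N -> K2 (b ^+ m)%g -> K1 (a ^+ (d * m))%g) ->
  coset_order R K1 a <= d%:R%:E * coset_order R K2 b.
Proof.
move=> d0 K21; case: (coset_order_spec K2 b) => [[-> _]|[m [m0 Km ->]]].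
  by rewrite gt0_muley ?leey // lte_fin ltr0n.
rewrite -EFinM -natrM; apply: ereal_inf_lbound; exists (d * m)%N => //.
by split; [rewrite muln_gt0 d0 m0|apply: K21].
Qed.

Lemma nuinvE A K g : nuinv R A K g = ereal_inv (nu R A K g).
Proof. by []. Qed.

Lemma nu_ge1 A K g : A g -> 1 <= nu R A K g.
Proof.
move=> Ag; rewrite /nu; case: pselect => Kg.
  apply: le_trans (ereal_sup_ubound _); last first.
    by exists g => //; split => //; exists 1%Z; rewrite /= expg1.
  apply: le_ereal_inf_tmp => _ [m [m0 _] <-].
  by rewrite lee_fin ler1n.
apply: ereal_sup_ubound; exists 1%Z => //; split => //.
by exists g; split => //; rewrite /= expg1.
Qed.

Lemma normal_conjI K H x c : normal_in setT K -> normal_in setT H ->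
  (K `&` H) (x ^ c)%g <-> (K `&` H) x.
Proof.
move=> nK nH; split=> -[Kx Hx]; split.
- exact: normal_conjK nK Kx.
- exact: normal_conjK nH Hx.
- exact: normal_conj.
- exact: normal_conj.
Qed.

Lemma nu_conj H K s c : normal_in setT H -> normal_in setT K ->
  nu R H (K `&` H) s <= nu R H (K `&` H) (s ^ c)%g.
Proof.
move=> nH nK; have KHJ x := normal_conjI x c nK nH.
rewrite /nu; case: pselect => Ks; case: pselect => Ksc.
- apply: ge_ereal_sup => _ [b [Hb [n e]] <-].
  apply: (le_trans _ (ereal_sup_ubound (x := coset_order R (K `&` H) (b ^ c)%g) _)).
    rewrite -[leRHS]mul1e; apply: (@coset_order_le_mul _ _ _ _ 1%N) => // m _.
    by rewrite mul1n -conjXg => /KHJ.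
  exists (b ^ c)%g => //; split; first exact: normal_conj.
  by exists n; rewrite zpowJ e.
- by case: Ksc; apply/KHJ.
- by case: Ks; apply/KHJ.
- apply: ge_ereal_sup => _ [n [n0 [b [Hb e]]] <-].
  apply: ereal_sup_ubound; exists n => //; split => //.
  by exists (b ^ c)%g; split; [apply: normal_conj|rewrite zpowJ e].
Qed.

Lemma coset_order_le_nu H K a d n s : is_subgroup H -> order_mod H a d ->
  H s -> K s -> zpow a n = s ->
  coset_order R K a <= d%:R%:E * nu R H (K `&` H) s.
Proof.
move=> sH ad Hs Ks e; have [q eq_s] := order_mod_zpow_root sH ad Hs e.
have [d0 Hd _] := ad; rewrite /nu; case: pselect => [KHs|nKHs]; last by case: nKHs.
apply: le_trans (coset_order_le_mul (K2 := K `&` H) (b := (a ^+ d)%g) d0 _) _.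
  by move=> m _ [Km _]; rewrite expgnA.
apply: lee_wpmul2l; first by rewrite lee_fin ler0n.
by apply: ereal_sup_ubound; exists (a ^+ d)%g => //; split => //; exists q.
Qed.

Lemma root_exponent_le_nu H K a d (k : nat) s : is_subgroup H -> order_mod H a d ->
  H s -> ~ K s -> (0 < k)%N -> zpow a (Posz k) = s ->
  (k%:R)%:E <= d%:R%:E * nu R H (K `&` H) s.
Proof.
move=> sH ad Hs Ks k0 e; have [d0 Hd _] := ad.
have dk : (d %| k)%N by apply: (order_mod_dvd sH ad); move: Hs; rewrite -e.
rewrite /nu; case: pselect => [[Ks_]|nKHs]; first by case: Ks.
have -> : (k%:R)%:E = d%:R%:E * (((Posz (k %/ d))%:~R)%:E : \bar R).
  by rewrite -EFinM -natrM mulnC divnK.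
apply: lee_wpmul2l; first by rewrite lee_fin ler0n.
apply: ereal_sup_ubound; exists (Posz (k %/ d)) => //; split.
  by rewrite eqz_nat -lt0n divn_gt0 // dvdn_leq.
by exists (a ^+ d)%g; split => //; rewrite /= -expgnA mulnC divnK.
Qed.

Lemma nu_le_index_mul H K s : is_subgroup H -> finite_set (cosets H) -> H s ->
  nu R setT K s <= (group_index H)%:R%:E * nu R H (K `&` H) s.
Proof.
move=> sH fH Hs; have nu_ge0 := le_trans lee01 (nu_ge1 (K `&` H) Hs).
have le_idx d : (d <= group_index H)%N ->
    d%:R%:E * nu R H (K `&` H) s <= (group_index H)%:R%:E * nu R H (K `&` H) s.
  by move=> didx; apply: lee_wpmul2r => //; rewrite lee_fin ler_nat.
rewrite {1}/nu; case: pselect => Ks; apply: ge_ereal_sup.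
  move=> _ [a [_ [n e]] <-]; have [d ad didx] := order_mod_exists a sH fH.
  exact: le_trans (coset_order_le_nu sH ad Hs Ks e) (le_idx d didx).
move=> _ [[k|k] [k0 [a [_ e]]] <-].
  have [d ad didx] := order_mod_exists a sH fH.
  have k_gt0 : (0 < k)%N by rewrite lt0n -eqz_nat.
  exact: le_trans (root_exponent_le_nu sH ad Hs Ks k_gt0 e) (le_idx d didx).
apply: le_trans (mule_ge0 _ nu_ge0); last by rewrite lee_fin.
by rewrite lee_fin NegzE mulrNz oppr_le0.
Qed.

Lemma nu_attained_mem K s : K s -> nu R setT K s != +oo ->
  exists a n, zpow a n = s /\ nu R setT K s = coset_order R K a.
Proof.
move=> Ks; rewrite /nu; case: pselect => [_Ks|//] /= supfin.
set S := [set coset_order R K a | a in _] in supfin *.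
have Sint x : S x -> x = +oo \/ exists z : int, x = (z%:~R)%:E.
  case=> a _ <-; case: (coset_order_spec K a) => [[-> _]|[m [_ _ ->]]].
    by left.
  by right; exists m.
have Ss : S (coset_order R K s).
  by exists s => //; split=> //; exists 1%Z; rewrite /= expg1.
have co_ge0 : 0 <= coset_order R K s.
  by case: (coset_order_spec K s) => [[-> _]|[m [_ _ ->]]]; rewrite ?leey ?lee_fin.
have [a [_ [n e]] E] := ereal_sup_int_mem Sint Ss co_ge0 supfin.
by exists a, n.
Qed.

Lemma nu_attained_nmem K s : ~ K s -> nu R setT K s != +oo ->
  exists a k, [/\ (0 < k)%N, zpow a (Posz k) = s & nu R setT K s = (k%:R)%:E].
Proof.
move=> Ks; have := nu_ge1 K (I : setT s).
rewrite /nu; case: pselect => [//|_nKs] /= nu1 supfin.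
set S := [set (n%:~R)%:E | n in _] in nu1 supfin *.
have Sint x : S x -> x = +oo \/ exists z : int, x = (z%:~R)%:E.
  by case=> z _ <-; right; exists z.
have S1 : S 1 by exists 1%Z => //; split=> //; exists s; rewrite /= expg1.
have [n [n0 [a [_ e]]] E] := ereal_sup_int_mem Sint S1 lee01 supfin.
case: n n0 e E => k n0 e E; last first.
  move: nu1; rewrite -E lee_fin => /(le_trans ler01).
  by rewrite NegzE mulrNz oppr_ge0 lern0.
by exists a, k; split=> //; rewrite lt0n -eqz_nat.
Qed.

Lemma nu_le_order_mod_mul H K s : is_subgroup H -> finite_set (cosets H) ->
  H s -> exists2 a, commute s a & forall d, order_mod H a d ->
    nu R setT K s <= d%:R%:E * nu R H (K `&` H) s.
Proof.
move=> sH fH Hs; have [nuoo|nufin] := eqVneq (nu R setT K s) +oo.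
  (* |G:H| is finite, so nu(s; H, K∩H) is infinite too and any [a] will do. *)
  exists s => // d [d0 _ _]; have := nu_le_index_mul K sH fH Hs; rewrite nuoo.
  case: (nu R H (K `&` H) s) (nu_ge1 (K `&` H) Hs) => [r||] //= _ _.
  by rewrite gt0_muley ?leey // lte_fin ltr0n.
case: (pselect (K s)) => Ks.
  have [a [n [e ->]]] := nu_attained_mem Ks nufin.
  exists a; first by rewrite -e; apply: zpow_commute.
  by move=> d ad; apply: coset_order_le_nu sH ad Hs Ks e.
have [a [k [k0 e ->]]] := nu_attained_nmem Ks nufin.
exists a; first by rewrite -e; apply: zpow_commute.
by move=> d ad; apply: root_exponent_le_nu sH ad Hs Ks k0 e.
Qed.

End RootOrders.

Section ConjugateGenerators.
Variable R : realType.
Variable gT : groupType.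
Implicit Types (A H K M : set gT) (s L : seq gT) (x y g : gT).

Lemma sum_le_size_mul (T : Type) (l : seq T) (f : T -> R) (c : R) :
  (forall t, f t <= c) -> \sum_(t <- l) f t <= (size l)%:R * c.
Proof.
move=> fc; elim: l => [|t l IH]; first by rewrite big_nil mul0r.
by rewrite big_cons /= -addn1 natrD mulrDl mul1r addrC lerD.
Qed.

Lemma sum_undup_le (T : eqType) (l : seq T) (f : T -> R) :
  (forall t, t \in l -> 0 <= f t) ->
  \sum_(t <- undup l) f t <= \sum_(t <- l) f t.
Proof.
elim: l => [|t l IH] f_ge0 //=; rewrite big_cons.
have IH' := IH (fun u ul => f_ge0 u (mem_behead (ul : u \in behead (t :: l)))).
case: ifP => tl; last by rewrite big_cons lerD.
by rewrite -[leLHS]add0r lerD // f_ge0 // mem_head.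
Qed.

Lemma nuinv_ge0 A K x : A x -> 0 <= nuinv R A K x.
Proof. by move=> Ax; rewrite nuinvE; apply/ereal_inv_ge0/nu_ge1. Qed.

Lemma nuinv_conj_le H K x c : normal_in setT H -> normal_in setT K -> H x ->
  nuinv R H (K `&` H) (x ^ c)%g <= nuinv R H (K `&` H) x.
Proof.
move=> nH nK Hx; rewrite !nuinvE; apply: ereal_inv_le; first exact: nu_ge1.
exact: nu_conj.
Qed.

Lemma nuinv_conj_representatives H K x : normal_in setT H ->
  finite_set (cosets H) -> H x ->
  exists Rl : seq gT,
    (forall g, exists2 r, r \in Rl & exists2 h, H h & (x ^ g = (x ^ r^-1) ^ h)%g) /\
    (size Rl)%:R * nuinv R H (K `&` H) x <= (group_index H)%:R * nuinv R setT K x.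
Proof.
move=> nH fH Hx; have [a cxa nu_le] := nu_le_order_mod_mul R K nH.1 fH Hx.
have [d ad _] := order_mod_exists a nH.1 fH; have [d_gt0 _ _] := ad.
have [Rl [szRl covRl]] := conj_representatives nH fH cxa ad.
exists Rl; split=> //; rewrite !nuinvE.
have nuG_ge1 := nu_ge1 R K (I : setT x).
apply: le_trans (ler_wpM2l (ler0n _ _) (ereal_inv_le_mul d_gt0 nuG_ge1 (nu_le d ad))) _.
by rewrite mulrA -natrM ler_wpM2r ?ereal_inv_ge0 // ler_nat.
Qed.

Lemma conjugate_generators H K M s : normal_in setT H -> normal_in setT K ->
  finite_set (cosets H) -> M `<=` H -> (forall y, y \in s -> M y) ->
  exists L, [/\ (forall l, l \in L -> exists y c, y \in s /\ l = (y ^ c)%g),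
    (forall y, y \in s -> forall g,
       exists2 l, l \in L & exists2 h, H h & (y ^ g = l ^ h)%g) &
    relsize_list R H (K `&` H) L <= (group_index H)%:R * relsize_list R setT K s].
Proof.
move=> nH nK fH MH; elim: s => [|y s IH] sM.
  by exists [::]; split=> //; rewrite /relsize_list !big_nil mulr0.
have [L [LJs sJL sumL]] := IH (fun z zs => sM z (mem_behead (zs : z \in behead (y :: s)))).
have Hy : H y by apply/MH/sM/mem_head.
have [Rl [covRl szRl]] := nuinv_conj_representatives K nH fH Hy.
exists ([seq (y ^ r^-1)%g | r <- Rl] ++ L); split.
- move=> l; rewrite mem_cat => /orP [/mapP [r _ ->]|lL].
    by exists y, r^-1%g; rewrite mem_head.
  by have [z [c [zs ->]]] := LJs l lL; exists z, c; rewrite in_cons zs orbT.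
- move=> z; rewrite in_cons => /orP [/eqP -> g|zs g].
    have [r rRl [h Hh e]] := covRl g.
    by exists (y ^ r^-1)%g; [rewrite mem_cat (map_f (fun r => (y ^ r^-1)%g) rRl)|exists h].
  have [l lL [h Hh e]] := sJL z zs g.
  by exists l; [rewrite mem_cat lL orbT|exists h].
rewrite /relsize_list big_cat big_map big_cons mulrDr lerD //.
by apply: le_trans szRl; apply: sum_le_size_mul => r; apply: nuinv_conj_le.
Qed.

Lemma relsize_le_index_mul_relsize_list H K M s : normal_in setT H ->
  normal_in setT K -> normal_in setT M -> finite_set (cosets H) -> M `<=` H ->
  ncl setT s = M ->
  relsize R H (K `&` H) M <= (group_index H)%:R * relsize_list R setT K s.
Proof.
move=> nH nK nM fH MH es.
have sM y : y \in s -> M y by move=> ys; rewrite -es; apply: ncl_mem.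
have [L [LJs sJL sumL]] := conjugate_generators nH nK fH MH sM.
have LH l : l \in L -> H l.
  by case/LJs=> y [c [ys ->]]; apply/MH/(normal_conj c nM)/sM.
apply: (le_trans _ sumL).
apply: (le_trans _ (sum_undup_le (fun t tL => nuinv_ge0 (K `&` H) (LH t tL)))).
apply: ge_inf.
  exists 0 => _ [l [_ [lH _]] <-]; rewrite /relsize_list big_seq.
  by rewrite sumr_ge0 // => t /lH /nuinv_ge0.
exists (undup L) => //; split; first exact: undup_uniq.
split; first by move=> y; rewrite mem_undup; apply: LH.
by rewrite ncl_undup; apply: ncl_conjugates nH nM MH es LJs sJL.
Qed.

End ConjugateGenerators.

Theorem mainTheorem14 (R : realType) (gT : groupType) (M K H : set gT) :
  normal_in setT M -> normal_in setT K ->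
  (exists s : seq gT, ncl setT s = M) ->
  normal_in setT H -> finite_set (cosets H) -> M `<=` H ->
  relsize R H (K `&` H) M <= (group_index H)%:R * relsize R setT K M.
Proof.
move=> nM nK [s0 es0] nH fH MH.
have idx_gt0 : (0 < (group_index H)%:R :> R) by rewrite ltr0n group_index_gt0.
rewrite -ler_pdivrMl //; apply: lb_le_inf.
  exists (relsize_list R setT K (undup s0)), (undup s0) => //.
  by split; [exact: undup_uniq|rewrite ncl_undup].
move=> _ [s [_ [_ es]] <-]; rewrite ler_pdivrMl //.
exact: relsize_le_index_mul_relsize_list.
Qed.
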